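(* Let $a,b,d<0$ be fixed real numbers. Then there exists $c^*\in\mathbb{R}$ such that for every real $c>c^*$, every polynomial $W_n(z)$ ($n\ge0$) of the normalised sequence defined below is real-rooted.
   Context: Put $A(z)=az+b$, $B(z)=cz+d$ with $c\in\mathbb{R}$, $c\ne0$. The normalised sequence $\{W_n(z)\}_{n\ge0}$ is defined by $W_0(z)=1$, $W_1(z)=z$ and $W_n(z)=A(z)W_{n-1}(z)+B(z)W_{n-2}(z)$ for $n\ge2$. Real-rooted means all zeros are real. *)

From Stdlib Require Import Reals List.
Open Scope R_scope.

(* The normalised sequence W_n(z), with A(z) = a z + b, B(z) = c z + d:
   W_0 = 1, W_1 = z, W_n = A W_{n-1} + B W_{n-2}  (n >= 2),
   represented as polynomial functions R -> R. *)
Fixpoint W (a b c d : R) (n : nat) (z : R) : R :=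
  match n with
  | O => 1
  | S m =>
      match m with
      | O => z
      | S k => (a * z + b) * W a b c d m z + (c * z + d) * W a b c d k z
      end
  end.

Definition prodlin (rs : list R) (z : R) : R :=
  fold_right (fun r acc => (z - r) * acc) 1 rs.

(* A (nonzero) real polynomial is real-rooted iff all its (complex) zeros
   are real, i.e. iff it factors as k * prod (z - r_i) with k <> 0 and all
   r_i real. *)
Definition real_rooted (f : R -> R) : Prop :=
  exists (k : R) (rs : list R), k <> 0 /\ forall z : R, f z = k * prodlin rs z.

From Stdlib Require Import Reals Lra Psatz.
From mathcomp Require Import ssreflect ssrbool eqtype ssrnat seq bigop.
From mathcomp Require Import ssralg poly Rstruct zify.
Import GRing.Theory.

(* Fix [z] with [B(z) = -s^2 < 0] and [A(z) = 2 s cos th].  Then the sequence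
   [W_m(z)] is [s^m (sin((m+1) th) + beta sin(m th)) / sin th] for some [beta],
   so [th = k pi / n] forces [W_n(z) = (-1)^k s^n].  When [c > 0], for every real
   [g] the system [A(z) = 2 s g], [B(z) = -s^2] has exactly one solution with
   [s > 0] (the positive root of a quadratic in [s]), and [z] decreases as [g]
   grows.  Taking [g = cos(k pi / n)] for [k = 1, ..., n-1] gives points
   [z_1 < ... < z_{n-1}], all with [B < 0], at which [W_n] alternates in sign.
   At [e = -b/2] we have [A(e) + 2e < 0], and [c > c*] means [B(e) > A(e)^2];
   then the recurrence propagates [(-1)^n W_n(e) > 0], a last sign change to
   the right of [z_{n-1}].  So [W_n] has [n-1] distinct real zeros, and since it
   has degree [n], its last zero is real as well. *)

Open Scope R_scope.

Lemma nat_ind2 (P : nat -> Prop) :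
  P 0%N -> P 1%N -> (forall m, P m -> P m.+1 -> P m.+2) -> forall m, P m.
Proof.
move=> P0 P1 IH m; suff: P m /\ P m.+1 by case.
by elim: m => [|m [IHm IHm1]]; split=> //; apply: IH.
Qed.

Definition angle (k n : nat) : R := INR k * PI / INR n.

Lemma angle0n n : angle 0 n = 0.
Proof. by rewrite /angle Rmult_0_l /Rdiv Rmult_0_l. Qed.

Lemma anglenn n : (0 < n)%N -> angle n n = PI.
Proof. by move=> n_gt0; rewrite /angle; field; apply: not_0_INR; lia. Qed.

Lemma angle_natmul k n : (0 < n)%N -> INR n * angle k n = INR k * PI.
Proof. by move=> n_gt0; rewrite /angle; field; apply: not_0_INR; lia. Qed.

Lemma angle_lt j k n : (j < k)%N -> (0 < n)%N -> angle j n < angle k n.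
Proof.
move=> j_k n_gt0; apply: Rmult_lt_compat_r.
  by apply/Rinv_0_lt_compat/lt_0_INR; lia.
by apply: Rmult_lt_compat_r; [exact: PI_RGT_0 | apply: lt_INR; lia].
Qed.

Lemma angle_ge0 j n : (0 < n)%N -> 0 <= angle j n.
Proof.
move=> n_gt0; apply: Rmult_le_pos; last by apply/Rlt_le/Rinv_0_lt_compat/lt_0_INR; lia.
by apply: Rmult_le_pos; [exact: pos_INR | exact: Rlt_le PI_RGT_0].
Qed.

Lemma angle_le_PI j n : (j <= n)%N -> (0 < n)%N -> angle j n <= PI.
Proof.
move=> j_n n_gt0; rewrite -(anglenn _ n_gt0); case: (ltnP j n) => [j_lt_n | n_j].
  exact/Rlt_le/angle_lt.
by rewrite (_ : j = n); [exact: Rle_refl | lia].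
Qed.

Lemma sin_angle_gt0 k n : (0 < k < n)%N -> 0 < sin (angle k n).
Proof.
move=> k_n; apply: sin_gt_0.
  by rewrite -(angle0n n); apply: angle_lt; lia.
by rewrite -(anglenn n); [apply: angle_lt|]; lia.
Qed.

Lemma cos_angle_lt j k n : (j < k)%N -> (k <= n)%N -> cos (angle k n) < cos (angle j n).
Proof.
move=> j_k k_n; have n_gt0 : (0 < n)%N by lia.
apply: cos_decreasing_1; try exact: angle_ge0.
- by apply: angle_le_PI => //; lia.
- exact: angle_le_PI.
- exact: angle_lt.
Qed.

Lemma sin_cos_nat_mul_PI k : sin (INR k * PI) = 0 /\ cos (INR k * PI) = (-1) ^ k.
Proof.
elim: k => [|k [IHs IHc]]; first by rewrite Rmult_0_l sin_0 cos_0.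
rewrite S_INR Rmult_plus_distr_r Rmult_1_l sin_plus cos_plus IHs IHc sin_PI cos_PI /=.
by split; ring.
Qed.

Lemma pow_neg1_sqr k : (-1) ^ k * (-1) ^ k = 1.
Proof. by rewrite -Rpow_mult_distr Rmult_opp_opp Rmult_1_r pow1. Qed.

Lemma alternating_mul_lt0 j x y : 0 < (-1) ^ j * x -> 0 < (-1) ^ j.+1 * y -> x * y < 0.
Proof. by have := pow_neg1_sqr j; rewrite /=; nra. Qed.

Section ChebyshevRecurrence.

Variables (u : nat -> R) (A s th : R).
Hypothesis u_rec : forall m, u m.+2 = A * u m.+1 - s ^ 2 * u m.
Hypothesis A_eq : A = 2 * s * cos th.

Lemma chebyshev_sin_repr m :
  u m * sin th * s =
  s ^ m * (u 0%N * s * sin (INR m.+1 * th) + (u 1%N - A * u 0%N) * sin (INR m * th)).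
Proof.
have sin_rec x : sin (x + th) = 2 * cos th * sin x - sin (x - th).
  by rewrite sin_plus sin_minus; ring.
have shift k : INR k.+2 * th = INR k.+1 * th + th by rewrite !S_INR; ring.
have unshift k : INR k.+1 * th - th = INR k * th by rewrite !S_INR; ring.
elim/nat_ind2: m => [| |m IH1 IH2].
- by rewrite /= !Rmult_1_l Rmult_0_l sin_0; ring.
- rewrite /= Rmult_1_l (_ : (1 + 1) * th = th + th) ?sin_plus ?A_eq; ring.
rewrite u_rec (shift m.+1) sin_rec unshift (shift m) sin_rec unshift.
rewrite (_ : (A * u m.+1 - s ^ 2 * u m) * sin th * s =
  A * (u m.+1 * sin th * s) - s ^ 2 * (u m * sin th * s)); last by ring.
by rewrite IH1 IH2 (shift m) sin_rec unshift A_eq /=; ring.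
Qed.

Lemma chebyshev_at_angle k n : 0 < s -> (0 < k < n)%N -> th = angle k n ->
  u n = u 0%N * s ^ n * (-1) ^ k.
Proof.
move=> s_gt0 k_n th_eq.
have sin_gt0 : 0 < sin th by rewrite th_eq; apply: sin_angle_gt0.
have [sin_kPI cos_kPI] := sin_cos_nat_mul_PI k.
have n_th : INR n * th = INR k * PI by rewrite th_eq angle_natmul //; lia.
have := chebyshev_sin_repr n.
rewrite S_INR Rmult_plus_distr_r Rmult_1_l n_th sin_plus sin_kPI cos_kPI => E.
apply: (Rmult_eq_reg_r (sin th * s)); last by nra.
by rewrite -Rmult_assoc E; ring.
Qed.

End ChebyshevRecurrence.

Lemma rec2_gt0 (v : nat -> R) p q :
  (forall m, v m.+2 = p * v m.+1 + q * v m) -> 0 <= p -> 0 < q ->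
  0 < v 0%N -> 0 < v 1%N -> forall m, 0 < v m.
Proof.
move=> v_rec p_ge0 q_gt0 v0 v1; elim/nat_ind2 => // m IH1 IH2.
by rewrite v_rec; nra.
Qed.

Definition quad_root (p q g : R) : R := (g + sqrt (g ^ 2 + p * q)) / p.

Section QuadRoot.

Variables p q : R.
Hypotheses (p_gt0 : 0 < p) (q_gt0 : 0 < q).

Lemma quad_root_gt0 g : 0 < quad_root p q g.
Proof.
have disc_gt0 : 0 < g ^ 2 + p * q by nra.
have sqrt_sq := sqrt_sqrt _ (Rlt_le _ _ disc_gt0).
have sqrt_ge0 := sqrt_pos (g ^ 2 + p * q).
by apply: Rdiv_lt_0_compat => //; nra.
Qed.

Lemma quad_rootE g : p * quad_root p q g ^ 2 - 2 * g * quad_root p q g = q.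
Proof.
have disc_ge0 : 0 <= g ^ 2 + p * q by nra.
rewrite /quad_root; field_simplify; last by lra.
by rewrite pow2_sqrt //; field; lra.
Qed.

Lemma quad_root_lt g h : g < h -> quad_root p q g < quad_root p q h.
Proof.
move=> g_h; have := quad_rootE g; have := quad_rootE h.
have := quad_root_gt0 g; have := quad_root_gt0 h.
set r := quad_root p q g; set t := quad_root p q h => t_gt0 r_gt0 tE rE.
apply: Rnot_le_lt => t_r.
have rt_gt0 : 0 < r * t by apply: Rmult_lt_0_compat.
have : 0 < r * t * (h - g) by apply: Rmult_lt_0_compat; lra.
have : 0 <= (r - t) * (p * (r * t) + q) by apply: Rmult_le_pos; nra.
nra.
Qed.

End QuadRoot.

Lemma ivt_root {f x y} : continuity f -> x < y -> f x * f y < 0 ->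
  exists r, x < r < y /\ f r = 0.
Proof.
have ivt g : continuity g -> x < y -> g x < 0 -> 0 < g y -> exists r, x < r < y /\ g r = 0.
  move=> g_cont x_y gx gy; have [r [[x_r r_y] gr]] := IVT g x y g_cont x_y gx gy.
  have r_ne_x : r <> x by move=> rx; rewrite rx in gr; lra.
  have r_ne_y : r <> y by move=> ry; rewrite ry in gr; lra.
  by exists r; split=> //; lra.
move=> f_cont x_y fxy; case: (Rlt_or_le (f x) 0) => [fx_lt0|fx_ge0].
  by apply: ivt => //; nra.
have fx_gt0 : 0 < f x by case: fx_ge0 => // fx0; rewrite -fx0 Rmult_0_l in fxy; lra.
have [r [xry fr]] := ivt (fun t => - f t) (continuity_opp _ f_cont) x_y ltac:(lra) ltac:(nra).
by exists r; split=> //; lra.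
Qed.

Lemma roots_of_sign_changes f (z : nat -> R) k : continuity f ->
  (forall j, (j < k)%N -> z j < z j.+1 /\ f (z j) * f (z j.+1) < 0) ->
  exists rs : seq R, size rs = k /\ uniq rs /\ forall r, r \in rs -> r < z k /\ f r = 0.
Proof.
move=> f_cont; elim: k => [|k IH] sign_changes; first by exists [::].
have [|rs [size_rs [uniq_rs rs_roots]]] := IH; first by move=> j j_k; apply: sign_changes; lia.
have [z_lt f_change] := sign_changes k (ltnSn k).
have [r [[zk_r r_zk1] fr]] := ivt_root f_cont z_lt f_change.
exists (r :: rs); split; first by rewrite /= size_rs.
split.
  by rewrite /= uniq_rs andbT; apply/negP => /rs_roots [r_zk _]; lra.
move=> t; rewrite in_cons => /orP [/eqP -> //|/rs_roots [t_zk ft]].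
by split=> //; lra.
Qed.

Lemma W_rec a b c d m z :
  W a b c d m.+2 z = (a * z + b) * W a b c d m.+1 z + (c * z + d) * W a b c d m z.
Proof. by []. Qed.

Lemma W_continuous a b c d n : continuity (W a b c d n).
Proof.
elim/nat_ind2: n => [| |n IH1 IH2].
- exact: continuity_const.
- exact: derivable_continuous derivable_id.
- by apply: continuity_plus; apply: continuity_mult => //; apply: derivable_continuous; reg.
Qed.

Lemma W_sign_beyond a b c d e : 0 < e -> a * e + b + 2 * e < 0 ->
  (a * e + b) ^ 2 < c * e + d ->
  forall n, (2 <= n)%N -> 0 < (-1) ^ n * W a b c d n e.
Proof.
move=> e_gt0 Ae_lt Be_gt; set A := a * e + b in Ae_lt Be_gt; set B := c * e + d in Be_gt.
have pos := rec2_gt0 (fun m => (-1) ^ m * W a b c d m.+2 e) (- A) B.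
move=> [|[|m]] // _; rewrite (_ : (-1) ^ m.+2 = (-1) ^ m); last by rewrite /=; ring.
apply: pos => [k||||].
- by rewrite [W _ _ _ _ k.+4 _]W_rec /A /B /=; ring.
- lra.
- nra.
- rewrite /= -/A -/B; nra.
- rewrite /= -/A -/B; nra.
Qed.

Section LevelPoints.

Variables a b c d : R.
Hypotheses (a_lt0 : a < 0) (b_lt0 : b < 0) (c_gt0 : 0 < c) (d_lt0 : d < 0).

Definition level_radius g := quad_root (- a / c) (a * d / c - b) g.

Definition level_point g := - (level_radius g ^ 2 + d) / c.

Let p_gt0 : 0 < - a / c.
Proof. by apply: Rdiv_lt_0_compat; lra. Qed.

Let q_gt0 : 0 < a * d / c - b.
Proof.
have ad_gt0 : 0 < a * d by nra.
have : 0 < a * d / c by apply: Rdiv_lt_0_compat.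
lra.
Qed.

Lemma level_radius_gt0 g : 0 < level_radius g.
Proof. exact: quad_root_gt0. Qed.

Lemma level_pointE g :
  c * level_point g + d = - level_radius g ^ 2 /\
  a * level_point g + b = 2 * level_radius g * g.
Proof.
have rE := quad_rootE _ _ p_gt0 q_gt0 g; rewrite -/(level_radius g) in rE.
rewrite /level_point; split; first by field; lra.
have -> : a * (- (level_radius g ^ 2 + d) / c) = - a / c * level_radius g ^ 2 - a * d / c.
  by field; lra.
lra.
Qed.

Lemma level_point_lt g h : g < h -> level_point h < level_point g.
Proof.
move=> g_h; have := quad_root_lt _ _ p_gt0 q_gt0 _ _ g_h.
rewrite -/(level_radius g) -/(level_radius h) => r_lt.
have := level_radius_gt0 g => r_gt0.
apply: Rmult_lt_compat_r; first exact: Rinv_0_lt_compat.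
nra.
Qed.

Lemma W_level_point_sign k n : (0 < k < n)%N ->
  0 < (-1) ^ k * W a b c d n (level_point (cos (angle k n))).
Proof.
move=> k_n; set z := level_point _; set s := level_radius (cos (angle k n)).
have [Bz Az] := level_pointE (cos (angle k n)); rewrite -/z -/s in Az Bz.
have -> : W a b c d n z = 1 * s ^ n * (-1) ^ k.
  apply: (chebyshev_at_angle (fun m => W a b c d m z) (a * z + b) s (angle k n)) => //.
  - by move=> m; rewrite W_rec Bz; ring.
  - exact: level_radius_gt0.
have := pow_neg1_sqr k.
have := pow_lt _ n (level_radius_gt0 (cos (angle k n))); rewrite -/s.
nra.
Qed.

Lemma W_roots e n : 0 < e -> a * e + b + 2 * e < 0 -> (a * e + b) ^ 2 < c * e + d ->
  exists rs : seq R, size rs = n.-1 /\ uniq rs /\ forall r, r \in rs -> W a b c d n r = 0.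
Proof.
move=> e_gt0 Ae_lt Be_gt.
pose pt j := if (j.+1 < n)%N then level_point (cos (angle j.+1 n)) else e.
have pt_sign j : (j < n)%N -> (1 < n)%N -> 0 < (-1) ^ j.+1 * W a b c d n (pt j).
  move=> j_n n_gt1; rewrite /pt; case: ifP => [j1_n|/negbT j1_n].
    by apply: W_level_point_sign; lia.
  by rewrite (_ : j.+1 = n); [apply: W_sign_beyond | lia].
have pt_lt j : (j.+1 < n)%N -> pt j < pt j.+1.
  move=> j1_n; rewrite /pt j1_n; case: ifP => [j2_n|_].
    by apply: level_point_lt; apply: cos_angle_lt; lia.
  have [Bz _] := level_pointE (cos (angle j.+1 n)).
  have := pow2_ge_0 (level_radius (cos (angle j.+1 n))).
  have := pow2_ge_0 (a * e + b).
  nra.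
have [|rs [size_rs [uniq_rs rs_roots]]] :=
  roots_of_sign_changes _ pt n.-1 (W_continuous a b c d n).
  move=> j j_n; split; first by apply: pt_lt; lia.
  by apply: (alternating_mul_lt0 j.+1); apply: pt_sign; lia.
by exists rs; split=> //; split=> // r /rs_roots [].
Qed.

End LevelPoints.

Section RealRootedPolynomials.

Local Open Scope ring_scope.

Lemma prodlinE (rs : seq R) z : prodlin rs z = (\prod_(r <- rs) ('X - r%:P)).[z].
Proof.
elim: rs => [|r rs IH]; first by rewrite big_nil hornerE.
by rewrite big_cons hornerM -IH /= !hornerE.
Qed.

(* The cofactor of [\prod_(r <- rs) ('X - r%:P)] in [p] has degree one, so its
   zero is real too. *)
Lemma real_rooted_of_roots (p : {poly R}) (rs : seq R) :
  size p = (size rs).+2 -> uniq rs -> all (root p) rs -> real_rooted (horner p).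
Proof.
move=> size_p uniq_rs rs_roots.
have [|q p_eq] := uniq_roots_prod_XsubC rs_roots (_ : uniq_roots rs).
  by rewrite uniq_rootsE.
set P := \prod_(r <- rs) ('X - r%:P) in p_eq.
have P_neq0 : P != 0 by rewrite -size_poly_gt0 size_prod_XsubC.
have q_neq0 : q != 0.
  by apply: contra_eq_neq p_eq => ->; rewrite mul0r -size_poly_gt0 size_p.
have size_q : size q = 2%N.
  move: size_p; rewrite p_eq size_mul // size_prod_XsubC addnS /= -addn2 addnC.
  exact: addnI.
have q1_neq0 : q`_1 != 0.
  by have := q_neq0; rewrite -lead_coef_eq0 lead_coefE size_q.
have qE z : q.[z] = q`_1 * z + q`_0.
  rewrite (@horner_coef_wide _ 2) ?size_q // !big_ord_recr big_ord0 /=.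
  by rewrite add0r expr0 expr1 mulr1 addrC.
exists q`_1, ((- q`_0 / q`_1) :: rs); split; first exact/eqP.
move=> z; rewrite /= prodlinE p_eq hornerM qE -/P.
by rewrite !RmultE RminusE mulNr opprK mulrA mulrDr mulrCA divff // mulr1.
Qed.

Fixpoint Wpoly (a b c d : R) (n : nat) : {poly R} :=
  match n with
  | 0 => 1
  | m.+1 =>
      match m with
      | 0 => 'X
      | k.+1 => (a *: 'X + b%:P) * Wpoly a b c d m + (c *: 'X + d%:P) * Wpoly a b c d k
      end
  end.

Lemma horner_Wpoly a b c d n z : (Wpoly a b c d n).[z] = W a b c d n z.
Proof.
elim/nat_ind2: n => [| |n IH1 IH2]; try by rewrite /= hornerE.
by rewrite W_rec -IH1 -IH2 /= !hornerE.
Qed.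

Lemma size_linear_poly (a b : R) : (size (a *: 'X + b%:P)%R <= 2)%N.
Proof.
by rewrite -mul_polyC size_MXaddC; case: ifP; rewrite // size_polyC; case: (a != 0).
Qed.

Lemma size_Wpoly a b c d n : a != 0 -> size (Wpoly a b c d n) = n.+1.
Proof.
move=> a_neq0; elim/nat_ind2: n => [| |n IH1 IH2]; rewrite /= ?size_poly1 ?size_polyX //.
have size_A : size (a *: 'X + b%:P) = 2%N.
  by rewrite -mul_polyC size_MXaddC polyC_eq0 (negbTE a_neq0) size_polyC a_neq0.
have size_AW : size ((a *: 'X + b%:P) * Wpoly a b c d n.+1) = n.+3.
  by rewrite size_mul -?size_poly_gt0 ?size_A ?IH2.
rewrite size_polyDl size_AW //.
apply: (leq_ltn_trans (size_polyMleq _ _)); rewrite IH1.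
by have := size_linear_poly c d; lia.
Qed.

Lemma W_real_rooted a b c d n (rs : seq R) : a != 0 -> (0 < n)%N -> size rs = n.-1 ->
  uniq rs -> (forall r, r \in rs -> W a b c d n r = 0) -> real_rooted (W a b c d n).
Proof.
move=> a_neq0 n_gt0 size_rs uniq_rs rs_roots.
have [|||k [rs' [k_neq0 WE]]] := real_rooted_of_roots (Wpoly a b c d n) rs => //.
- by rewrite size_Wpoly // size_rs; lia.
- by apply/allP => r /rs_roots; rewrite /root horner_Wpoly => ->.
by exists k, rs'; split=> // z; rewrite -WE horner_Wpoly.
Qed.

End RealRootedPolynomials.

Theorem theorem5p1 (a b d : R) (ha : a < 0) (hb : b < 0) (hd : d < 0) :
  exists cstar : R, forall c : R, cstar < c -> c <> 0 ->
    forall n : nat, real_rooted (W a b c d n).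
Proof.
pose e := - b / 2.
have e_gt0 : 0 < e by rewrite /e; lra.
exists (((a * e + b) ^ 2 - d) / e) => c c_gt _ [|n].
  by exists 1, nil; split=> [|z]; [exact: R1_neq_R0 | rewrite /= Rmult_1_r].
have Be_gt : (a * e + b) ^ 2 < c * e + d.
  have := Rmult_lt_compat_r e _ _ e_gt0 c_gt.
  by rewrite (_ : _ / e * e = (a * e + b) ^ 2 - d); [lra | field; lra].
have c_gt0 : 0 < c by have := pow2_ge_0 (a * e + b); nra.
have Ae_lt : a * e + b + 2 * e < 0 by rewrite /e; nra.
have [rs [size_rs [uniq_rs rs_roots]]] :=
  W_roots _ _ _ _ ha hb c_gt0 hd e n.+1 e_gt0 Ae_lt Be_gt.
by apply: (W_real_rooted _ _ _ _ _ rs) => //; apply/eqP/Rlt_not_eq.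
Qed.
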